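(* Let $X$ be a CFG-space over a Boolean ring $B$ and $0\in X$. Then the pointed space $(X,0)$ possesses a base.
   Context: $B$ is a Boolean ring ($a\vee b=a+b+ab$, $a\le b\iff ab=a$, $\bar a=1+a$; $a_1\oplus\cdots\oplus a_n$ denotes a sum of pairwise disjoint elements). A Boolean metric space over $B$: set $X$ with $d:X\times X\to B$, $d(x,y)=0\iff x=y$, symmetric, $d(x,z)\le d(x,y)\vee d(y,z)$. For $x_1,\dots,x_n\in X$ and $a_1,\dots,a_n\in B$ with $a_1\oplus\cdots\oplus a_n=1$, $x$ is a convex combination of the $x_i$ with coefficients $a_i$ if $a_id(x,x_i)=0$ for all $i$. $X$ is convex if all such combinations exist; a CFG-space is a convex space in which every element is a convex combination of elements of some fixed finite subset. In a pointed space $(X,0)$ write $|x|=d(0,x)$. Two elements $x,y$ are orthogonal if $d(x,y)=|x|\vee|y|$. A finite set $R\subseteq X$ is orthogonal if $0\notin R$ and any two distinct elements of $R$ are orthogonal. A referential (reference system) of $(X,0)$ is an orthogonal set $R$ such that every element of $X$ is a convex combination of elements of $R\cup\{0\}$. A base of $(X,0)$ is a referential $\{x_1,\dots,x_n\}$ with $|x_1|\ge|x_2|\ge\cdots\ge|x_n|$. *)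

From HB Require Import structures.
From mathcomp Require Import all_boot all_order all_algebra.
Set Implicit Arguments. Unset Strict Implicit. Unset Printing Implicit Defensive.
Import GRing.Theory.
Local Open Scope ring_scope.

Definition boolean_ring (B : comPzRingType) : Prop := forall a : B, a * a = a.

Definition bjoin {B : comPzRingType} (a b : B) : B := a + b + a * b.
Definition ble {B : comPzRingType} (a b : B) : Prop := a * b = a.

Definition disjoint_partition {B : comPzRingType} (n : nat) (a : 'I_n -> B) : Prop :=
  (forall i j : 'I_n, i != j -> a i * a j = 0) /\ \sum_(i < n) a i = 1.

Definition boolean_metric {B : comPzRingType} {X : Type} (d : X -> X -> B) : Prop :=
  (forall x y, d x y = 0 <-> x = y) /\
  (forall x y, d x y = d y x) /\
  (forall x y z, ble (d x z) (bjoin (d x y) (d y z))).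

Definition convex_comb {B : comPzRingType} {X : Type} (d : X -> X -> B)
  (y : X) (n : nat) (x : 'I_n -> X) (a : 'I_n -> B) : Prop :=
  disjoint_partition a /\ forall i, a i * d y (x i) = 0.

Definition convex_space {B : comPzRingType} {X : Type} (d : X -> X -> B) : Prop :=
  forall (n : nat) (x : 'I_n -> X) (a : 'I_n -> B),
    disjoint_partition a -> exists y, convex_comb d y x a.

Definition convex_comb_of {B : comPzRingType} {X : Type} (d : X -> X -> B)
  (P : X -> Prop) (y : X) : Prop :=
  exists (n : nat) (x : 'I_n -> X) (a : 'I_n -> B),
    (forall i, P (x i)) /\ convex_comb d y x a.

Definition CFG_space {B : comPzRingType} {X : Type} (d : X -> X -> B) : Prop :=
  convex_space d /\
  exists (m : nat) (s : 'I_m -> X),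
    forall y, convex_comb_of d (fun z => exists j, z = s j) y.

(* pointed space (X, o): |x| = d o x *)
Definition orthogonal {B : comPzRingType} {X : Type} (d : X -> X -> B) (o x y : X) : Prop :=
  d x y = bjoin (d o x) (d o y).

Definition orthogonal_set {B : comPzRingType} {X : Type} (d : X -> X -> B) (o : X)
  (n : nat) (r : 'I_n -> X) : Prop :=
  (forall i, r i <> o) /\ (forall i j, i != j -> orthogonal d o (r i) (r j)).

Definition referential {B : comPzRingType} {X : Type} (d : X -> X -> B) (o : X)
  (n : nat) (r : 'I_n -> X) : Prop :=
  injective r /\ orthogonal_set d o r /\
  forall y, convex_comb_of d (fun z => z = o \/ exists i, z = r i) y.

Definition is_base {B : comPzRingType} {X : Type} (d : X -> X -> B) (o : X)
  (n : nat) (r : 'I_n -> X) : Prop :=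
  referential d o r /\
  forall i j : 'I_n, (i <= j)%N -> ble (d o (r j)) (d o (r i)).

Definition has_base {B : comPzRingType} {X : Type} (d : X -> X -> B) (o : X) : Prop :=
  exists (n : nat) (r : 'I_n -> X), is_base d o r.

From Pilot Require Import Defs.
From HB Require Import structures.
From mathcomp Require Import all_boot all_order all_algebra.
From Stdlib Require Import ClassicalEpsilon Classical.
Set Implicit Arguments. Unset Strict Implicit. Unset Printing Implicit Defensive.
Import GRing.Theory.
Local Open Scope ring_scope.

(* Let s_0, ..., s_(m-1) generate X convexly.  By induction on j we build a
   sequence r_0, r_1, ... which is pairwise orthogonal, has decreasing norms
   |r_k| = d o r_k, satisfies r_k = o for k >= j, and such that s_0, ...,
   s_(j-1) are convex combinations of o, r_0, ..., r_(m-1) ([insert_all]).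
   The induction step ([insert_point]) inserts t = s_j: if [fresh] is the part
   of |t| on which t is far from every r_i, then on the piece
   [slot k] = fresh |r_(k-1)| (1 - |r_k|) of B the point t is glued in place
   of r_k.  The new sequence is still orthogonal and decreasing, and t as well
   as every old r_k is a combination of it together with o; combinations of
   combinations being combinations ([comb_trans]), after m steps every point
   is generated.  Dropping the trailing copies of o yields a base. *)

Lemma boolean_addxx (B : comPzRingType) (HB : boolean_ring B) (x : B) : x + x = 0.
Proof.
have h := HB (x + x).
rewrite mulrDl !mulrDr HB in h.
have : (x + x) + (x + x) = 0 + (x + x) by rewrite add0r -{3}h addrA.
by move/addIr.
Qed.

Lemma boolean_oppr (B : comPzRingType) (HB : boolean_ring B) (x : B) : - x = x.
Proof. by apply/esym/eqP; rewrite -addr_eq0 boolean_addxx. Qed.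

Inductive bterm : Type :=
  | BVar (i : nat) | BZero | BOne
  | BAdd (x y : bterm) | BMul (x y : bterm) | BOpp (x : bterm).

Fixpoint eval_ring (B : comPzRingType) (e : nat -> B) (t : bterm) : B :=
  match t with
  | BVar i => e i | BZero => 0 | BOne => 1
  | BAdd x y => eval_ring e x + eval_ring e y
  | BMul x y => eval_ring e x * eval_ring e y
  | BOpp x => - eval_ring e x
  end.

Fixpoint eval_bool (e : nat -> bool) (t : bterm) : bool :=
  match t with
  | BVar i => e i | BZero => false | BOne => true
  | BAdd x y => xorb (eval_bool e x) (eval_bool e y)
  | BMul x y => eval_bool e x && eval_bool e y
  | BOpp x => eval_bool e x
  end.

Definition bool_to_ring (B : comPzRingType) (b : bool) : B := if b then 1 else 0.

Lemma eval_ring_bool (B : comPzRingType) (HB : boolean_ring B) e t :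
  eval_ring (fun i => bool_to_ring B (e i)) t = bool_to_ring B (eval_bool e t).
Proof.
elim: t => //= [x -> y ->|x -> y ->|x ->].
- by case: (eval_bool e x); case: (eval_bool e y);
    rewrite /bool_to_ring /= ?addr0 ?add0r ?boolean_addxx.
- by case: (eval_bool e x); case: (eval_bool e y);
    rewrite /bool_to_ring /= ?mulr0 ?mul0r ?mulr1.
- by rewrite boolean_oppr.
Qed.

Lemma eq_eval_ring (B : comPzRingType) (e1 e2 : nat -> B) t :
  e1 =1 e2 -> eval_ring e1 t = eval_ring e2 t.
Proof. by move=> h; elim: t => /= [i|||x -> y ->|x -> y ->|x ->]. Qed.

Definition update {T : Type} (e : nat -> T) n (v : T) : nat -> T :=
  fun i => if i == n then v else e i.

Lemma shannon (B : comPzRingType) (HB : boolean_ring B) (e : nat -> B) n t :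
  eval_ring e t =
  e n * eval_ring (update e n 1) t + (1 - e n) * eval_ring (update e n 0) t.
Proof.
set x := e n.
have split1 a : x * a + (1 - x) * a = a by rewrite -mulrDl addrC subrK mul1r.
have xy : x * (1 - x) = 0 by rewrite mulrBr mulr1 HB subrr.
have yx : (1 - x) * x = 0 by rewrite mulrC.
have yy : (1 - x) * (1 - x) = 1 - x by apply: HB.
set y := 1 - x in split1 xy yx yy *; clearbody y.
elim: t => /= [i|||a -> b ->|a -> b ->|a ->].
- by rewrite /update; case: eqP => [->|_]; rewrite ?mulr1 ?mulr0 ?addr0 ?split1.
- by rewrite !mulr0 addr0.
- by rewrite split1.
- by rewrite !mulrDr addrACA.
- set a1 := eval_ring _ a; set a0 := eval_ring _ a.
  set b1 := eval_ring _ b; set b0 := eval_ring _ b.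
  rewrite !mulrDl !mulrDr (mulrACA x a1 x b1) (mulrACA x a1 y b0).
  rewrite (mulrACA y a0 x b1) (mulrACA y a0 y b0).
  by rewrite HB xy yx yy !mul0r addr0 add0r.
- by rewrite !mulrN opprD.
Qed.

Fixpoint check_all (n : nat) (be : nat -> bool) (t u : bterm) : bool :=
  if n is n'.+1 then
    check_all n' (update be n' true) t u && check_all n' (update be n' false) t u
  else eval_bool be t == eval_bool be u.

Definition mixed_env {B : comPzRingType} n (env : nat -> B) (be : nat -> bool) :=
  fun i => if (i < n)%N then env i else bool_to_ring B (be i).

Lemma check_all_sound (B : comPzRingType) (HB : boolean_ring B) n
    (env : nat -> B) be t u :
  check_all n be t u ->
  eval_ring (mixed_env n env be) t = eval_ring (mixed_env n env be) u.
Proof.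
elim: n be => [|n IH] be /=.
  move/eqP=> h.
  rewrite !(@eq_eval_ring _ (mixed_env 0 env be) (fun i => bool_to_ring B (be i))) //.
  by rewrite !(eval_ring_bool HB) h.
case/andP=> h1 h0.
have mixed_update v w :
    eval_ring (update (mixed_env n.+1 env be) n (bool_to_ring B v)) w =
    eval_ring (mixed_env n env (update be n v)) w.
  apply: eq_eval_ring => i; rewrite /update /mixed_env.
  case: eqP => [->|ne]; first by rewrite ltnn.
  by rewrite ltnS leq_eqVlt; case: ltnP => //=; case: eqP.
rewrite (shannon HB _ n t) (shannon HB _ n u).
by rewrite !(mixed_update true) !(mixed_update false) (IH _ h1) (IH _ h0).
Qed.

(* The hypotheses h1 = h2 are encoded by the factor prod (1 - (h1 - h2)),
   which is 1 exactly when all of them hold. *)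
Definition hyp_guard (hs : seq (bterm * bterm)) : bterm :=
  foldr (fun h acc => BMul (BAdd BOne (BOpp (BAdd h.1 (BOpp h.2)))) acc) BOne hs.

Fixpoint implies (P : seq Prop) (C : Prop) : Prop :=
  if P is p :: P' then p -> implies P' C else C.

Fixpoint all_hold {B : comPzRingType} (e : nat -> B) (hs : seq (bterm * bterm)) :=
  if hs is h :: hs' then eval_ring e h.1 = eval_ring e h.2 /\ all_hold e hs'
  else True.

Lemma boolean_implication (B : comPzRingType) (HB : boolean_ring B) (env : seq B)
    (hs : seq (bterm * bterm)) (t u : bterm) :
  check_all (size env) (fun _ => false)
    (BMul t (hyp_guard hs)) (BMul u (hyp_guard hs)) ->
  implies [seq eval_ring (nth 0 env) h.1 = eval_ring (nth 0 env) h.2 | h <- hs]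
          (eval_ring (nth 0 env) t = eval_ring (nth 0 env) u).
Proof.
move=> /(check_all_sound HB (nth 0 env)) h.
have env_nth w : eval_ring (mixed_env (size env) (nth 0 env) (fun _ => false)) w =
                 eval_ring (nth 0 env) w.
  apply: eq_eval_ring => i; rewrite /mixed_env.
  by case: ltnP => // hi; rewrite nth_default.
rewrite /= !env_nth in h.
suff hold : all_hold (nth 0 env) hs -> eval_ring (nth 0 env) t = eval_ring (nth 0 env) u.
  elim: hs {h} hold => /= [|p hs IH] H; first exact: H.
  by move=> Hp; apply: IH => Hall; apply: H.
move=> Hall.
have guard1 : eval_ring (nth 0 env) (hyp_guard hs) = 1.
  elim: hs {h} Hall => //= p hs IH [Hp Hall].
  by rewrite IH // Hp subrr oppr0 addr0 mulr1.
by rewrite guard1 !mulr1 in h.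
Qed.

Ltac list_mem a l := lazymatch l with
  | nil => constr:(false) | cons a _ => constr:(true)
  | cons _ ?l' => list_mem a l' end.
Ltac list_index a l := lazymatch l with
  | cons a _ => constr:(0%nat)
  | cons _ ?l' => let n := list_index a l' in constr:(S n) end.
Ltac atoms t l := lazymatch t with
  | (?x + ?y)%R => let l := atoms x l in atoms y l
  | (?x * ?y)%R => let l := atoms x l in atoms y l
  | (- ?x)%R => atoms x l
  | 0%R => l | 1%R => l
  | _ => let b := list_mem t l in
         lazymatch b with true => l | false => constr:(cons t l) end
  end.
Ltac reify t l := lazymatch t with
  | (?x + ?y)%R => let a := reify x l in let b := reify y l in constr:(BAdd a b)
  | (?x * ?y)%R => let a := reify x l in let b := reify y l in constr:(BMul a b)
  | (- ?x)%R => let a := reify x l in constr:(BOpp a)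
  | 0%R => constr:(BZero) | 1%R => constr:(BOne)
  | _ => let n := list_index t l in constr:(BVar n)
  end.
Ltac goal_atoms g l := lazymatch g with
  | (?a = ?b) -> ?g' => let l := atoms a l in let l := atoms b l in goal_atoms g' l
  | ?a = ?b => let l := atoms a l in atoms b l end.
Ltac reify_hyps g l := lazymatch g with
  | (?a = ?b) -> ?g' =>
      let x := reify a l in let y := reify b l in let r := reify_hyps g' l in
      constr:(cons (x, y) r)
  | _ = _ => constr:(@nil (bterm * bterm)) end.
Ltac reify_concl g l := lazymatch g with
  | _ -> ?g' => reify_concl g' l
  | ?a = ?b => let x := reify a l in let y := reify b l in constr:((x, y)) end.

(* Proves goals  h_1 -> ... -> h_n -> a = b  of ring equations in a Boolean
   ring (given the proof HB of booleanity) by checking all 0/1 valuations. *)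
Ltac bsolve HB :=
  rewrite /bjoin /ble;
  lazymatch goal with |- ?g =>
    lazymatch type of HB with boolean_ring ?B =>
    let l := goal_atoms g (@nil B) in
    let hs := reify_hyps g l in
    let c := reify_concl g l in
    lazymatch c with (?t, ?u) =>
      refine (@boolean_implication B HB l hs t u _); vm_compute; reflexivity end end end.

Section BooleanMetric.

Variables (B : comPzRingType) (X : Type) (d : X -> X -> B).
Hypotheses (HB : boolean_ring B) (Hd : boolean_metric d).

Lemma dist_xx x : d x x = 0.
Proof. by case: Hd => [h _]; apply: (proj2 (h x x)). Qed.

Lemma dist_sym x y : d x y = d y x.
Proof. by case: Hd => [_ [h _]]. Qed.

Lemma dist_triangle x y z : d x z * bjoin (d x y) (d y z) = d x z.
Proof. by case: Hd => [_ [_ h]]; apply: h. Qed.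

Lemma dist_eq0 x y : d x y = 0 -> x = y.
Proof. by case: Hd => [h _]; apply: (proj1 (h x y)). Qed.

(* The weights a_i exhibit y as a convex combination of x_0, ..., x_(N-1);
   nat-indexed families are easier to manipulate than the ordinal-indexed
   ones of [convex_comb]. *)
Definition comb_weights (N : nat) (x : nat -> X) (y : X) (a : nat -> B) : Prop :=
  (forall i k, (i < N)%N -> (k < N)%N -> i != k -> a i * a k = 0) /\
  \sum_(i < N) a i = 1 /\
  (forall i, (i < N)%N -> a i * d y (x i) = 0).

Definition comb (N : nat) (x : nat -> X) (y : X) : Prop :=
  exists a : nat -> B, comb_weights N x y a.

Lemma sum_delta N i0 (u : B) : (i0 < N)%N ->
  \sum_(i < N) (if (i : nat) == i0 then u else 0) = u.
Proof.
move=> h; rewrite (bigD1 (Ordinal h)) //= eqxx big1 ?addr0 // => i ne.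
by case: eqP => // ei; move: ne; rewrite -val_eqE /= ei eqxx.
Qed.

Lemma comb_point N x y i0 : (i0 < N)%N -> d y (x i0) = 0 -> comb N x y.
Proof.
move=> hi hd; exists (fun i => if i == i0 then 1 else 0); split; [|split].
- move=> i k _ _ ne; case: (eqVneq i i0) => [ei|_]; last by rewrite mul0r.
  by rewrite -ei eq_sym (negbTE ne) mulr0.
- exact: sum_delta.
- by move=> i _; case: (eqVneq i i0) => [->|]; rewrite ?hd ?mulr0 ?mul0r.
Qed.

Lemma comb_pair N x y i0 i1 (E : B) :
  (i0 < N)%N -> (i1 < N)%N -> i0 != i1 ->
  E * d y (x i0) = 0 -> (1 - E) * d y (x i1) = 0 -> comb N x y.
Proof.
move=> h0 h1 ne hE hE'.
pose a i := (if i == i0 then E else 0) + (if i == i1 then 1 - E else 0).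
exists a; split; [|split].
- have EE : E * (1 - E) = 0 by rewrite mulrBr mulr1 HB subrr.
  have EE' : (1 - E) * E = 0 by rewrite mulrC.
  move=> i k _ _ nik; rewrite /a.
  case: (eqVneq i i0) => e0; case: (eqVneq i i1) => e1;
  case: (eqVneq k i0) => f0; case: (eqVneq k i1) => f1;
  rewrite ?addr0 ?add0r ?mulr0 ?mul0r ?EE ?EE' //; exfalso; move: nik ne;
  subst; rewrite ?eqxx //.
- by rewrite big_split /= !sum_delta // addrC subrK.
- move=> i _; rewrite /a; case: (eqVneq i i0) => e0; case: (eqVneq i i1) => e1;
  rewrite ?addr0 ?add0r ?mul0r //; subst => //.
  by move: ne; rewrite eqxx.
Qed.

(* Transitivity: a combination of combinations of z is a combination of z.
   The new weight of z_k is  sum_i a_i b_ik. *)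
Lemma comb_trans N M x z y :
  comb N x y -> (forall i, (i < N)%N -> comb M z (x i)) -> comb M z y.
Proof.
case=> a [a_disj [a_sum a_dist]] Hx.
have [b b_spec] : exists b : nat -> nat -> B,
    forall i, (i < N)%N -> comb_weights M z (x i) (b i).
  have choice i : exists bi, (i < N)%N -> comb_weights M z (x i) bi.
    case: (ltnP i N) => hi; last by exists (fun _ => 0).
    by case: (Hx i hi) => bi hbi; exists bi.
  exists (fun i => proj1_sig (constructive_indefinite_description _ (choice i))).
  by move=> i; apply: (proj2_sig (constructive_indefinite_description _ (choice i))).
exists (fun k => \sum_(i < N) a i * b i k); split; [|split].
- move=> k l hk hl nkl; rewrite big_distrl /=; apply: big1 => i _.
  rewrite big_distrr /=; apply: big1 => i' _.
  case: (eqVneq (i : nat) i') => [<-|ne].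
  + case: (b_spec i (ltn_ord i)) => bd _.
    by move: (bd k l hk hl nkl); bsolve HB.
  + by move: (a_disj i i' (ltn_ord i) (ltn_ord i') ne); bsolve HB.
- rewrite exchange_big /= -[RHS]a_sum; apply: eq_bigr => i _.
  by rewrite -big_distrr /=; case: (b_spec i (ltn_ord i)) => _ [-> _]; rewrite mulr1.
- move=> k hk; rewrite big_distrl /=; apply: big1 => i _.
  case: (b_spec i (ltn_ord i)) => _ [_ b_dist].
  move: (a_dist i (ltn_ord i)) (b_dist k hk) (dist_triangle y (x i) (z k)).
  bsolve HB.
Qed.

Lemma orthogonal_sym o x y : Defs.orthogonal d o x y -> Defs.orthogonal d o y x.
Proof. by rewrite /Defs.orthogonal (dist_sym y) => ->; bsolve HB. Qed.

Lemma self_orthogonal o x : Defs.orthogonal d o x x -> x = o.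
Proof.
rewrite /Defs.orthogonal (dist_xx x) => h; apply/esym/dist_eq0.
by move: h; bsolve HB.
Qed.

Lemma comb_convex_comb_of (P : X -> Prop) N x y :
  comb N x y -> (forall i, (i < N)%N -> P (x i)) -> convex_comb_of d P y.
Proof.
move=> [a [a_disj [a_sum a_dist]]] HP.
exists N, (fun i : 'I_N => x i), (fun i : 'I_N => a i).
split; [|split; [split|]] => //.
- by move=> i; apply: HP.
- by move=> i k nik; apply: a_disj => //; rewrite val_eqE.
- by move=> i; apply: a_dist.
Qed.

End BooleanMetric.

Section Gluing.

Variables (B : comPzRingType) (X : Type) (d : X -> X -> B).
Hypotheses (HB : boolean_ring B) (Hd : boolean_metric d) (Hconv : convex_space d).

Lemma glue_exists (a : B) x y : exists z, a * d z x = 0 /\ (1 - a) * d z y = 0.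
Proof.
have hp : disjoint_partition (fun i : 'I_2 => if i == ord0 then a else 1 - a).
  split.
  - move=> [[|[|i]] hi] [[|[|k]] hk] //= _;
    by rewrite ?mulrBr ?mulrBl ?mulr1 ?mul1r HB subrr.
  - by rewrite !big_ord_recl big_ord0 /= addr0 addrC subrK.
have [z [_ hz]] := Hconv (fun i : 'I_2 => if i == ord0 then x else y) hp.
by exists z; split; [apply: (hz ord0) | apply: (hz (Ordinal (isT : (1 < 2)%N)))].
Qed.

Definition glue (a : B) (x y : X) : X :=
  proj1_sig (constructive_indefinite_description _ (glue_exists a x y)).

Lemma glue_spec a x y : a * d (glue a x y) x = 0 /\ (1 - a) * d (glue a x y) y = 0.
Proof. exact: proj2_sig (constructive_indefinite_description _ (glue_exists a x y)). Qed.

Lemma dist_glue a x y w : d w (glue a x y) = a * d w x + (1 - a) * d w y.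
Proof.
have [hx hy] := glue_spec a x y; move: hx hy.
move: (dist_triangle Hd w x (glue a x y)) (dist_triangle Hd w (glue a x y) x).
move: (dist_triangle Hd w y (glue a x y)) (dist_triangle Hd w (glue a x y) y).
rewrite (dist_sym Hd x) (dist_sym Hd y); bsolve HB.
Qed.

End Gluing.

Definition with_origin {X : Type} (o : X) (r : nat -> X) (i : nat) : X :=
  if i is i'.+1 then r i' else o.

Definition ortho_seq {B : comPzRingType} {X : Type} (d : X -> X -> B) (o : X)
    (r : nat -> X) (j : nat) : Prop :=
  (forall i k, i != k -> Defs.orthogonal d o (r i) (r k)) /\
  (forall i k, (i <= k)%N -> ble (d o (r k)) (d o (r i))) /\
  (forall i, (j <= i)%N -> r i = o).

Section Insertion.

Variables (B : comPzRingType) (X : Type) (d : X -> X -> B).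
Hypotheses (HB : boolean_ring B) (Hd : boolean_metric d) (Hconv : convex_space d).
Variables (o t : X) (r : nat -> X) (m j : nat).
Hypothesis Hjm : (j < m)%N.
Hypothesis Hort : forall i k, i != k -> Defs.orthogonal d o (r i) (r k).
Hypothesis Hdec : forall i k, (i <= k)%N -> ble (d o (r k)) (d o (r i)).
Hypothesis Htail : forall i, (j <= i)%N -> r i = o.

Definition far (k : nat) : B := \prod_(i < k) d t (r i).

Definition fresh : B := d o t * far m.

Definition prev_norm (k : nat) : B := if k is k'.+1 then d o (r k') else 1.

(* The part of [fresh] sitting between |r_k| and |r_(k-1)|: there t replaces
   r_k. *)
Definition slot (k : nat) : B := fresh * prev_norm k * (1 - d o (r k)).

Definition near (k : nat) : B := d o t * far k * (1 - d t (r k)).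

Definition inserted (k : nat) : X := glue HB Hconv (slot k) t (r k).

Lemma far0 : far 0 = 1.
Proof. by rewrite /far big_ord0. Qed.

Lemma farS k : far k.+1 = far k * d t (r k).
Proof. by rewrite /far big_ord_recr. Qed.

(* The relations between the pieces of B defined above, which are the
   hypotheses of the Boolean identities below. *)
Lemma norm_tail i : (j <= i)%N -> d o (r i) = 0.
Proof. by move=> hi; rewrite Htail // (dist_xx Hd). Qed.

Lemma prev_norm_dec k l : (k < l)%N -> prev_norm l * d o (r k) = prev_norm l.
Proof. by case: l => // l hl; apply: Hdec. Qed.

Lemma norm_prev_norm k : d o (r k) * prev_norm k = d o (r k).
Proof. by case: k => [|k]; rewrite ?mulr1 //; apply: Hdec. Qed.

Lemma far_dec k l : (k < l)%N -> far l * d t (r k) = far l.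
Proof.
elim: l => // l IHl; rewrite ltnS leq_eqVlt => /orP[/eqP->|hl].
  by rewrite farS -mulrA HB.
by rewrite farS mulrAC IHl.
Qed.

Lemma fresh_norm : fresh * d o t = fresh.
Proof. by rewrite /fresh; bsolve HB. Qed.

Lemma fresh_far k : fresh * d t (r k) = fresh.
Proof.
case: (ltnP k m) => hk; first by rewrite /fresh -mulrA far_dec.
by rewrite Htail ?(leq_trans (ltnW Hjm)) // (dist_sym Hd t o) fresh_norm.
Qed.

Lemma slot_tail k : (j < k)%N -> slot k = 0.
Proof. by case: k => // k hk; rewrite /slot /= norm_tail // mulr0 mul0r. Qed.

Lemma dist_inserted w k : d w (inserted k) = slot k * d w t + (1 - slot k) * d w (r k).
Proof. exact: dist_glue. Qed.

Lemma inserted_orthogonal i k : i != k -> Defs.orthogonal d o (inserted i) (inserted k).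
Proof.
wlog lt_ik : i k / (i < k)%N => [W nik|nik].
  case: (ltngtP i k) => h; first exact: W.
    by apply: (orthogonal_sym HB Hd); apply: W; rewrite // eq_sym.
  by move: nik; rewrite h eqxx.
rewrite /Defs.orthogonal (dist_inserted (inserted i) k) (dist_sym Hd (inserted i) t).
rewrite (dist_inserted t i) (dist_sym Hd (inserted i) (r k)) (dist_inserted (r k) i).
rewrite (dist_sym Hd (r k) t) (dist_inserted o i) (dist_inserted o k) (dist_xx Hd t).
rewrite (Hort (_ : k != i)) 1?eq_sym // /slot.
move: (prev_norm_dec lt_ik) (fresh_far i) (fresh_far k) (Hdec (ltnW lt_ik)).
move: (norm_prev_norm i) (norm_prev_norm k) fresh_norm; rewrite /ble; bsolve HB.
Qed.

Lemma inserted_dec i k : (i <= k)%N -> ble (d o (inserted k)) (d o (inserted i)).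
Proof.
rewrite leq_eqVlt => /orP[/eqP->|lt_ik]; first by rewrite /ble HB.
rewrite /ble (dist_inserted o i) (dist_inserted o k) /slot.
move: (prev_norm_dec lt_ik) (Hdec (ltnW lt_ik)) (norm_prev_norm i).
move: (norm_prev_norm k) fresh_norm; rewrite /ble; bsolve HB.
Qed.

Lemma inserted_tail i : (j < i)%N -> inserted i = o.
Proof.
move=> hi; have [_ h] := glue_spec HB Hconv (slot i) t (r i).
rewrite -/(inserted i) slot_tail // subr0 mul1r in h.
by rewrite (dist_eq0 Hd h) Htail // ltnW.
Qed.

Definition t_weight (k : nat) : B := if k is k'.+1 then slot k' + near k' else 1 - d o t.

(* Since the pieces [slot k] and [near k] are disjoint over all k, these
   weights form a partition of unity, which telescopes. *)
Lemma t_weight_disjoint i k : i != k -> t_weight i * t_weight k = 0.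
Proof.
have key i' k' : (i' < k')%N -> (slot i' + near i') * (slot k' + near k') = 0.
  move=> lt; rewrite /slot /near.
  move: (prev_norm_dec lt) (fresh_far i') (fresh_far k') (far_dec lt).
  bsolve HB.
case: i k => [|i] [|k] nik //=; rewrite ?eqxx // /slot /near.
- by move: fresh_norm; bsolve HB.
- by move: fresh_norm; bsolve HB.
case: (ltngtP i k) => h; first exact: key.
  by rewrite mulrC key.
by move: nik; rewrite h eqxx.
Qed.

Lemma t_weight_sum : \sum_(k < m.+1) t_weight k = 1.
Proof.
rewrite big_ord_recl /= -(big_mkord xpredT (fun k => t_weight k.+1)).
rewrite (telescope_sumr_eq (fun k => fresh * prev_norm k + d o t * far k)) //.
  have prev_norm_m : prev_norm m = 0.
    by move: Hjm; rewrite /prev_norm; case: m => // m' hm; apply: norm_tail.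
  by rewrite far0 prev_norm_m /fresh /=; bsolve HB.
move=> k _ /=; rewrite farS /slot /near.
move: (norm_prev_norm k); bsolve HB.
Qed.

Lemma comb_t : comb d m.+1 (with_origin o inserted) t.
Proof.
exists t_weight; split; [|split].
- by move=> i k _ _; apply: t_weight_disjoint.
- exact: t_weight_sum.
move=> [|k] _ /=; first by rewrite (dist_sym Hd t o); bsolve HB.
rewrite (dist_inserted t k) (dist_xx Hd t) /slot /near.
by move: (fresh_far k); bsolve HB.
Qed.

(* Each old r_k is o on slot k and the new point inserted_k elsewhere. *)
Lemma comb_old i : (i < m.+1)%N -> comb d m.+1 (with_origin o inserted) (with_origin o r i).
Proof.
case: i => [|k] hk /=.
  by apply: (comb_point (i0 := 0%N)) => //=; rewrite (dist_xx Hd).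
apply: (comb_pair HB (i0 := 0%N) (i1 := k.+1) (E := slot k)) => //=.
  by rewrite (dist_sym Hd (r k) o) /slot; bsolve HB.
by rewrite (dist_inserted (r k) k) (dist_xx Hd); bsolve HB.
Qed.

Lemma insert_point : exists r' : nat -> X,
  [/\ ortho_seq d o r' j.+1, comb d m.+1 (with_origin o r') t &
      forall i, (i < m.+1)%N -> comb d m.+1 (with_origin o r') (with_origin o r i)].
Proof.
exists inserted; split; [split; [|split]| |].
- exact: inserted_orthogonal.
- exact: inserted_dec.
- exact: inserted_tail.
- exact: comb_t.
- exact: comb_old.
Qed.

End Insertion.

Section Base.

Variables (B : comPzRingType) (X : Type) (d : X -> X -> B).
Hypotheses (HB : boolean_ring B) (Hd : boolean_metric d).

Lemma insert_all (Hconv : convex_space d) (o : X) (m : nat) (s : nat -> X) j :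
  (j <= m)%N -> exists r : nat -> X,
    ortho_seq d o r j /\ forall i, (i < j)%N -> comb d m.+1 (with_origin o r) (s i).
Proof.
elim: j => [_|j IH hj].
  exists (fun _ => o); split => //; split; [|split] => //.
  - by move=> i k _; rewrite /Defs.orthogonal /bjoin !(dist_xx Hd) mulr0 !addr0.
  - by move=> i k _; rewrite /ble (dist_xx Hd) mulr0.
have [r [[Hort [Hdec Htail]] Hs]] := IH (ltnW hj).
have [r' [Hr' Ht Hold]] := insert_point HB Hd Hconv (s j) hj Hort Hdec Htail.
exists r'; split => // i; rewrite ltnS leq_eqVlt => /orP[/eqP->|hi] //.
exact: (comb_trans HB Hd (Hs i hi) Hold).
Qed.

(* Since the norms decrease, the terms different from o form an initial
   segment of an orthogonal sequence. *)
Lemma ortho_seq_support (o : X) (r : nat -> X) m : ortho_seq d o r m ->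
  exists n, ortho_seq d o r n /\ forall i, (i < n)%N -> r i <> o.
Proof.
case=> Hort [Hdec]; elim: m => [Htail|m IH Htail].
  by exists 0%N; split => //; split.
case: (classic (r m = o)) => hm.
  by apply: IH => i; rewrite leq_eqVlt => /orP[/eqP<-//|]; apply: Htail.
exists m.+1; split; first by split.
move=> i hi ro; apply: hm; apply/esym/(dist_eq0 Hd).
by have := Hdec i m hi; rewrite /ble ro (dist_xx Hd) mulr0.
Qed.

(* The generators of a CFG-space as a nat-indexed family (padded with an
   arbitrary point o beyond the last generator). *)
Lemma CFG_generators (o : X) : CFG_space d ->
  exists (m : nat) (s : nat -> X), forall y, comb d m s y.
Proof.
case=> _ [m [s Hs]].
pose sn i := oapp s o (insub i : option 'I_m).
have snE (j : 'I_m) : sn j = s j by rewrite /sn valK.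
exists m, sn => y; have [n [x [a [Hx [[a_disj a_sum] a_dist]]]]] := Hs y.
pose xn i := oapp x o (insub i : option 'I_n).
pose an i := oapp a 0 (insub i : option 'I_n).
have xnO (i : 'I_n) : xn i = x i by rewrite /xn valK.
have xnE i (hi : (i < n)%N) : xn i = x (Ordinal hi) by rewrite -xnO.
have anO (i : 'I_n) : an i = a i by rewrite /an valK.
have anE i (hi : (i < n)%N) : an i = a (Ordinal hi) by rewrite -anO.
apply: (comb_trans HB Hd (N := n) (x := xn)).
  exists an; split; [|split].
  - move=> i k hi hk nik; rewrite (anE i hi) (anE k hk); apply: a_disj.
    by rewrite -val_eqE.
  - by rewrite -[RHS]a_sum; apply: eq_bigr => i _; rewrite anO.
  - by move=> i hi; rewrite (anE i hi) (xnE i hi); apply: a_dist.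
move=> i hi; rewrite (xnE i hi); have [g ->] := Hx (Ordinal hi).
by apply: (comb_point (i0 := g)) => //; rewrite snE (dist_xx Hd).
Qed.

Lemma ortho_seq_base (o : X) (r : nat -> X) n M :
  ortho_seq d o r n -> (forall i, (i < n)%N -> r i <> o) ->
  (forall y, comb d M (with_origin o r) y) -> is_base d o (fun i : 'I_n => r i).
Proof.
move=> [Hort [Hdec Htail]] Hnz Hgen.
split; last by move=> i k hik; apply: Hdec.
split; [|split; [split|]].
- move=> i k e; apply/eqP; apply: contraT => nik.
  have := Hort i k; rewrite val_eqE e => /(_ nik) /(self_orthogonal HB Hd).
  by move/(Hnz k (ltn_ord k)).
- by move=> i; apply: Hnz.
- by move=> i k nik; apply: Hort; rewrite val_eqE.
move=> y; apply: (comb_convex_comb_of (Hgen y)) => -[|k] _ /=; first by left.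
case: (ltnP k n) => hkn; first by right; exists (Ordinal hkn).
by left; apply: Htail.
Qed.

End Base.

Theorem mainTheorem4 (B : comPzRingType) (HB : boolean_ring B)
  (X : Type) (d : X -> X -> B) (Hd : boolean_metric d) (Hcfg : CFG_space d)
  (o : X) : has_base d o.
Proof.
have [m [s Hs]] := CFG_generators HB Hd o Hcfg.
have [r [Hr Hsr]] := insert_all HB Hd (proj1 Hcfg) o s (leqnn m).
have Hgen y : comb d m.+1 (with_origin o r) y := comb_trans HB Hd (Hs y) Hsr.
have [n [Hrn Hnz]] := ortho_seq_support Hd Hr.
by exists n, (fun i : 'I_n => r i); apply: ortho_seq_base Hrn Hnz Hgen.
Qed.
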